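(* Let $M$ be a bicomplex Hilbert space (as defined below) and let $A:M\to M$ be a bicomplex self-adjoint operator, i.e. a $\mathbb{T}$-linear operator with $A=A^*$. Suppose $A|\psi\rangle=\lambda|\psi\rangle$ with $\lambda\in\mathbb{T}$ and $|\psi\rangle\in M$ not in the null-cone, i.e. $|\psi\rangle=\mathbf{e_1}|\psi_{\mathbf{e_1}}\rangle+\mathbf{e_2}|\psi_{\mathbf{e_2}}\rangle$ with $|\psi_{\mathbf{e_1}}\rangle\ne0$ and $|\psi_{\mathbf{e_2}}\rangle\ne0$. Then $\lambda\in\mathbb{D}$, i.e. $\lambda$ is a hyperbolic number.
   Context: Bicomplex numbers: $\mathbb{T}=\{z_1+z_2\mathbf{i_2}: z_1,z_2\in\mathbb{C}(\mathbf{i_1})\}$, $\mathbb{C}(\mathbf{i_1})=\{x+y\mathbf{i_1}: x,y\in\mathbb{R}\}$, $\mathbf{i_1}^2=\mathbf{i_2}^2=-1$, $\mathbf{i_1}\mathbf{i_2}=\mathbf{i_2}\mathbf{i_1}=\mathbf{j}$, $\mathbf{j}^2=1$ (commutative). Hyperbolic numbers $\mathbb{D}=\{x+y\mathbf{j}:x,y\in\mathbb{R}\}$. Idempotents $\mathbf{e_1}=(1+\mathbf{j})/2$, $\mathbf{e_2}=(1-\mathbf{j})/2$. Conjugation: $(z_1+z_2\mathbf{i_2})^{\dagger_3}=\overline{z_1}-\overline{z_2}\mathbf{i_2}$. $\mathbb{D}^+=\{a\mathbf{e_1}+b\mathbf{e_2}: a,b\ge 0\}$. $M$ is a free $\mathbb{T}$-module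 with finite basis $\{|m_1\rangle,\dots,|m_n\rangle\}$, $V=\{\sum x_l|m_l\rangle: x_l\in\mathbb{C}(\mathbf{i_1})\}$; for $|\phi\rangle=\sum x_l|m_l\rangle$ with $x_l=x_{1l}\mathbf{e_1}+x_{2l}\mathbf{e_2}$, $x_{kl}\in\mathbb{C}(\mathbf{i_1})$, set $|\phi_{\mathbf{e_k}}\rangle=\sum_l x_{kl}|m_l\rangle\in V$, so $|\phi\rangle=\mathbf{e_1}|\phi_{\mathbf{e_1}}\rangle+\mathbf{e_2}|\phi_{\mathbf{e_2}}\rangle$ uniquely. $M$ carries a bicomplex scalar product $(\cdot,\cdot):M\times M\to\mathbb{T}$: additive in the second argument, $(|\phi\rangle,\alpha|\psi\rangle)=\alpha(|\phi\rangle,|\psi\rangle)$ for $\alpha\in\mathbb{T}$, $(|\phi\rangle,|\psi\rangle)=(|\psi\rangle,|\phi\rangle)^{\dagger_3}$, $(|\phi\rangle,|\phi\rangle)=0\iff|\phi\rangle=0$, hyperbolic positive ($(|\phi\rangle,|\phi\rangle)\in\mathbb{D}^+$) and closed on $V$ ($(|\phi\rangle,|\psi\rangle)\in\mathbb{C}(\mathbf{i_1})$ for $|\phi\rangle,|\psi\rangle\in V$); ''bicomplex Hilbert space'' means moreover $M$ is complete for the norm $\|\phi\|=\big((\|\phi_{\mathbf{e_1}}\|^2+\|\phi_{\mathbf{e_2}}\|^2)/2\big)^{1/2}$, $\|\chi\|=(\chi,\chi)^{1/2}$ on $V$. The bicomplex adjoint $A^*$ of a $\mathbb{T}$-linear $A$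 is the operator with $(A|\psi\rangle,|\phi\rangle)=(|\psi\rangle,A^*|\phi\rangle)$ for all $|\phi\rangle,|\psi\rangle\in M$. *)

(* T     := (R[i])[i], i.e. pairs z1 + z2 i2 with z1 z2 in C(i1) and i2^2 = -1. *)
From HB Require Import structures.
From mathcomp Require Import all_boot all_order all_algebra.
From mathcomp Require Import reals.
From mathcomp.real_closed Require Import complex.

Set Implicit Arguments.
Unset Strict Implicit.
Unset Printing Implicit Defensive.

Import Order.TTheory GRing.Theory Num.Theory.
Local Open Scope ring_scope.
Local Open Scope complex_scope.

Section Bicomplex.
Variable R : realType.

Definition Ci1 := R[i].
Definition bicomplex := (R[i])[i].

Definition bcC (z : R[i]) : bicomplex := Complex z 0.
Definition bcR (x : R) : bicomplex := bcC (x%:C).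

Definition bi1 : bicomplex := bcC 'i.
Definition bi2 : bicomplex := Complex 0 1.
Definition bj : bicomplex := bi1 * bi2.

Definition be1 : bicomplex := bcR (2^-1) * (1 + bj).
Definition be2 : bicomplex := bcR (2^-1) * (1 - bj).

Definition conj3 (z : bicomplex) : bicomplex :=
  let: z1 +i* z2 := z in Complex (Num.conj z1) (- Num.conj z2).

Definition inCi1 (z : bicomplex) : Prop := exists w : R[i], z = bcC w.

Definition inD (z : bicomplex) : Prop :=
  exists x y : R, z = bcR x + bcR y * bj.

Definition inDplus (z : bicomplex) : Prop :=
  exists a b : R, 0 <= a /\ 0 <= b /\ z = bcR a * be1 + bcR b * be2.

(* The free T-module M with finite basis |m_1>, ..., |m_n> is represented
   by its coordinate space T^n (column vectors); |m_l> is the l-th standard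
   basis vector. *)
Definition Mod (n : nat) := 'cV[bicomplex]_n.

Definition embV n (v : 'cV[R[i]]_n) : Mod n := map_mx bcC v.

Definition inV n (phi : Mod n) : Prop := forall l, inCi1 (phi l 0).

(* idempotent components: z1 + z2 i2 = (z1 - i1 z2) e1 + (z1 + i1 z2) e2 *)
Definition idem1 (z : bicomplex) : R[i] := let: z1 +i* z2 := z in z1 - 'i * z2.
Definition idem2 (z : bicomplex) : R[i] := let: z1 +i* z2 := z in z1 + 'i * z2.

Definition comp_e1 n (phi : Mod n) : Mod n := embV (map_mx idem1 phi).
Definition comp_e2 n (phi : Mod n) : Mod n := embV (map_mx idem2 phi).

Record bicomplex_scalar_product n (sp : Mod n -> Mod n -> bicomplex) : Prop := {
  sp_add2 : forall phi psi chi, sp phi (psi + chi) = sp phi psi + sp phi chi;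
  sp_scale2 : forall (alpha : bicomplex) phi psi, sp phi (alpha *: psi) = alpha * sp phi psi;
  sp_conj : forall phi psi, sp phi psi = conj3 (sp psi phi);
  sp_definite : forall phi, sp phi phi = 0 <-> phi = 0;
  sp_hyp_pos : forall phi, inDplus (sp phi phi);
  sp_closed_V : forall phi psi, inV phi -> inV psi -> inCi1 (sp phi psi)
}.

(* norm on V : ||chi|| = (chi,chi)^{1/2}; (chi,chi) lies in C(i1) and D^+,
   hence is a nonnegative real, its first C(i1)-component's real part *)
Definition normV n (sp : Mod n -> Mod n -> bicomplex) (chi : Mod n) : R :=
  let: z1 +i* _ := sp chi chi in let: a +i* _ := z1 in Num.sqrt a.

Definition normM n (sp : Mod n -> Mod n -> bicomplex) (phi : Mod n) : R :=
  Num.sqrt ((normV sp (comp_e1 phi) ^+ 2 + normV sp (comp_e2 phi) ^+ 2) / 2%:R).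

Definition complete_for n (nrm : Mod n -> R) : Prop :=
  forall u : nat -> Mod n,
    (forall eps : R, 0 < eps -> exists N : nat, forall p q : nat,
        (N <= p)%N -> (N <= q)%N -> nrm (u p - u q) < eps) ->
    exists l : Mod n, forall eps : R, 0 < eps -> exists N : nat, forall p : nat,
        (N <= p)%N -> nrm (u p - l) < eps.

Definition bicomplex_Hilbert n (sp : Mod n -> Mod n -> bicomplex) : Prop :=
  bicomplex_scalar_product sp /\ complete_for (normM sp).

Definition T_linear n (A : Mod n -> Mod n) : Prop :=
  (forall phi psi, A (phi + psi) = A phi + A psi) /\
  (forall (alpha : bicomplex) phi, A (alpha *: phi) = alpha *: A phi).

Definition is_adjoint n (sp : Mod n -> Mod n -> bicomplex) (A B : Mod n -> Mod n) : Prop :=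
  forall phi psi, sp (A psi) phi = sp psi (B phi).

Definition self_adjoint n (sp : Mod n -> Mod n -> bicomplex) (A : Mod n -> Mod n) : Prop :=
  T_linear A /\ is_adjoint sp A A.

End Bicomplex.

(* Self-adjointness gives (lambda - lambda^dagger3) (psi, psi) = 0.  In the
   idempotent basis (psi, psi) = e1 (psi_e1, psi_e1) + e2 (psi_e2, psi_e2), and
   both coefficients are nonzero elements of C(i1) by definiteness and closedness
   on V, so (psi, psi) is invertible.  Hence lambda = lambda^dagger3, and the
   bicomplex numbers fixed by dagger3 are exactly the hyperbolic ones. *)
From mathcomp Require Import all_boot all_order all_algebra.
From mathcomp Require Import reals.
From mathcomp.real_closed Require Import complex.
From mathcomp Require Import ring lra.

Set Implicit Arguments.
Unset Strict Implicit.
Unset Printing Implicit Defensive.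

Import Order.TTheory GRing.Theory Num.Theory.
Local Open Scope ring_scope.
Local Open Scope complex_scope.

Section ComplexArithmetic.
Variable S : fieldType.
Implicit Types a b c d : S.

Lemma complex_addE a b c d : (a +i* b) + (c +i* d) = (a + c) +i* (b + d) :> S[i].
Proof. by []. Qed.

Lemma complex_oppE a b : - (a +i* b) = (- a) +i* (- b) :> S[i].
Proof. by []. Qed.

Lemma complex_mulE a b c d :
  (a +i* b) * (c +i* d) = (a * c - b * d) +i* (a * d + b * c) :> S[i].
Proof. by []. Qed.

Lemma complex1E : 1 = 1 +i* 0 :> S[i]. Proof. by []. Qed.

Lemma complex0E : 0 = 0 +i* 0 :> S[i]. Proof. by []. Qed.

End ComplexArithmetic.

Lemma idem_comb_mul (T : comPzRingType) (e1 e2 x1 x2 y1 y2 : T) :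
  e1 * e1 = e1 -> e2 * e2 = e2 -> e1 * e2 = 0 ->
  (e1 * x1 + e2 * x2) * (e1 * y1 + e2 * y2) = e1 * (x1 * y1) + e2 * (x2 * y2).
Proof. by move=> e11 e22 e12; ring: e11 e22 e12. Qed.

Lemma complex_iE (R : rcfType) : 'i = 0 +i* 1 :> R[i]. Proof. by []. Qed.

Lemma complex_conjE (R : rcfType) (a b : R) : Num.conj (a +i* b) = a +i* (- b).
Proof. by []. Qed.

Section BicomplexAlgebra.
Variable R : realType.
Implicit Types (x y z : bicomplex R) (a b c d : R).

Lemma bicomplex_eq4 a b c d a' b' c' d' : a = a' -> b = b' -> c = c' -> d = d' ->
  (a +i* b) +i* (c +i* d) = (a' +i* b') +i* (c' +i* d') :> bicomplex R.
Proof. by move=> -> -> -> ->. Qed.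

Local Ltac bicomplex_coords :=
  rewrite /be1 /be2 /bcR /bcC /bj /bi1 /bi2 /conj3 ?(complex1E, complex0E, complex_iE);
  rewrite ?(complex_mulE, complex_addE, complex_oppE, complex_conjE);
  apply: bicomplex_eq4.

Lemma be1_idem : be1 R * be1 R = be1 R.
Proof. by bicomplex_coords; field. Qed.

Lemma be2_idem : be2 R * be2 R = be2 R.
Proof. by bicomplex_coords; field. Qed.

Lemma be1_mul_be2 : be1 R * be2 R = 0.
Proof. by bicomplex_coords; field. Qed.

Lemma be1_add_be2 : be1 R + be2 R = 1.
Proof. by bicomplex_coords; field. Qed.

Lemma conj3_be1 : conj3 (be1 R) = be1 R.
Proof. by bicomplex_coords; field. Qed.

Lemma conj3_be2 : conj3 (be2 R) = be2 R.
Proof. by bicomplex_coords; field. Qed.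

Lemma conj3D x y : conj3 (x + y) = conj3 x + conj3 y.
Proof.
by case: x y => [[a b] [c d]] [[a' b'] [c' d']]; bicomplex_coords; ring.
Qed.

Lemma conj3M x y : conj3 (x * y) = conj3 x * conj3 y.
Proof.
by case: x y => [[a b] [c d]] [[a' b'] [c' d']]; bicomplex_coords; ring.
Qed.

Lemma conj3_fixed_inD x : conj3 x = x -> inD x.
Proof.
case: x => [[a b] [c d]]; rewrite /conj3 !complex_conjE complex_oppE => -[b0 c0].
by exists a, d; bicomplex_coords; lra.
Qed.

Lemma bcCM (u v : R[i]) : bcC u * bcC v = bcC (u * v) :> bicomplex R.
Proof. by rewrite /bcC complex_mulE !mul0r !mulr0 subr0 addr0. Qed.

Lemma bcC1 : bcC 1 = 1 :> bicomplex R. Proof. by []. Qed.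

Lemma idem_comb_mulV (u v : R[i]) : u != 0 -> v != 0 ->
  (be1 R * bcC u + be2 R * bcC v) * (be1 R * bcC u^-1 + be2 R * bcC v^-1) = 1.
Proof.
move=> u0 v0; rewrite idem_comb_mul ?be1_idem ?be2_idem ?be1_mul_be2 //.
by rewrite !bcCM !mulfV // bcC1 !mulr1 be1_add_be2.
Qed.

Lemma mul_idem_comb_eq0 (u v : R[i]) z : u != 0 -> v != 0 ->
  z * (be1 R * bcC u + be2 R * bcC v) = 0 -> z = 0.
Proof.
move=> u0 v0 Ez.
by rewrite -[z]mulr1 -(idem_comb_mulV u0 v0) mulrA Ez mul0r.
Qed.

End BicomplexAlgebra.

Lemma embV_eq0 (R : realType) n (p : 'cV[R[i]]_n) : (embV p == 0) = (p == 0).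
Proof.
apply/eqP/eqP => [Ep | ->]; apply/matrixP => i j; last by rewrite /embV !mxE.
by have := congr1 (fun m : Mod R n => m i j) Ep; rewrite /embV !mxE => -[].
Qed.

Lemma inV_embV (R : realType) n (p : 'cV[R[i]]_n) : inV (embV p).
Proof. by move=> l; exists (p l 0); rewrite /embV mxE. Qed.

Section ScalarProduct.
Variables (R : realType) (n : nat) (sp : Mod R n -> Mod R n -> bicomplex R).
Hypothesis sp_ax : bicomplex_scalar_product sp.

Lemma sp_add1 phi psi chi : sp (phi + psi) chi = sp phi chi + sp psi chi.
Proof. by rewrite (sp_conj sp_ax) (sp_add2 sp_ax) conj3D -!(sp_conj sp_ax). Qed.

Lemma sp_scale1 alpha phi psi : sp (alpha *: phi) psi = conj3 alpha * sp phi psi.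
Proof. by rewrite (sp_conj sp_ax) (sp_scale2 sp_ax) conj3M -!(sp_conj sp_ax). Qed.

Lemma sp_idem_comb (v1 v2 : Mod R n) :
  sp (be1 R *: v1 + be2 R *: v2) (be1 R *: v1 + be2 R *: v2)
  = be1 R * sp v1 v1 + be2 R * sp v2 v2.
Proof.
rewrite !sp_add1 !sp_scale1 !(sp_add2 sp_ax) !(sp_scale2 sp_ax) conj3_be1 conj3_be2.
by ring: (be1_idem R) (be2_idem R) (be1_mul_be2 R).
Qed.

Lemma sp_embV_self (p : 'cV[R[i]]_n) :
  p != 0 -> exists2 c : R[i], c != 0 & sp (embV p) (embV p) = bcC c.
Proof.
move=> p_nz; have [c spE] := sp_closed_V sp_ax (inV_embV p) (inV_embV p).
exists c => //; apply: contraNneq p_nz => c0.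
by rewrite -embV_eq0; apply/eqP/(sp_definite sp_ax); rewrite spE c0.
Qed.

Lemma adjoint_eigen_conj3_sp (A : Mod R n -> Mod R n) lambda psi :
  is_adjoint sp A A -> A psi = lambda *: psi ->
  (lambda - conj3 lambda) * sp psi psi = 0.
Proof.
move=> adjA Apsi; have := adjA psi psi.
by rewrite Apsi sp_scale1 (sp_scale2 sp_ax) mulrBl => ->; rewrite subrr.
Qed.

End ScalarProduct.

Theorem mainTheorem20 (R : realType) (n : nat)
    (sp : Mod R n -> Mod R n -> bicomplex R)
    (A : Mod R n -> Mod R n) (lambda : bicomplex R) (psi : Mod R n) :
  bicomplex_Hilbert sp ->
  self_adjoint sp A ->
  A psi = lambda *: psi ->
  (exists psi1 psi2 : 'cV[R[i]]_n,
      psi = be1 R *: embV psi1 + be2 R *: embV psi2 /\ psi1 != 0 /\ psi2 != 0) ->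
  inD lambda.
Proof.
move=> [sp_ax _] [_ adjA] Apsi [psi1 [psi2 [psiE [psi1_nz psi2_nz]]]].
have [c1 c1_nz sp1] := sp_embV_self sp_ax psi1_nz.
have [c2 c2_nz sp2] := sp_embV_self sp_ax psi2_nz.
apply/conj3_fixed_inD/esym/subr0_eq.
apply: (mul_idem_comb_eq0 c1_nz c2_nz).
rewrite -sp1 -sp2 -sp_idem_comb // -psiE.
exact: adjoint_eigen_conj3_sp adjA Apsi.
Qed.
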